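(* Let $K\subset\mathbb{C}^2$ be a bombon such that the (complex) ellipsoid of minimal volume containing $K$ is the closed unit ball $B$ of $\mathbb{C}^2$. Then $K\cap\mathbb{S}^3$ is a linearly closed subset of the abstract linear space $LS^3$.
   Context: A convex body is a compact convex subset of $\mathbb{C}^n$ with nonempty interior. A (complex) ellipsoid is the image of the closed Euclidean unit ball under an invertible complex affine map. A bombon is a convex body $K\subset\mathbb{C}^n$ such that for every complex affine line $L$, $L\cap K$ is empty, a single point, or a closed round disk in $L$. $\mathbb{S}^3=\partial B$ is the unit sphere of $\mathbb{C}^2$. The abstract linear space $LS^3$ has point set $\mathbb{S}^3$ and abstract lines the sets $L\cap\mathbb{S}^3$ where $L$ is a complex affine line of $\mathbb{C}^2$ meeting $\mathbb{S}^3$ in more than one point (i.e. non-tangential; such $L\cap\mathbb{S}^3$ is a round circle); any two distinct points of $\mathbb{S}^3$ lie on exactly one abstract line. A subset $A\subset\mathbb{S}^3$ is linearly closed if for any two distinct $x,y\in A$ the abstract line through $x$ and $y$ is contained in $A$. *)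

(* C^2 is modelled concretely as
   ((R * R) * (R * R)) : a point (z1, z2) with z_k = (Re z_k, Im z_k). *)
From HB Require Import structures.
From mathcomp Require Import all_boot all_order all_algebra.
From mathcomp Require Import all_classical all_reals all_analysis.
Set Implicit Arguments. Unset Strict Implicit. Unset Printing Implicit Defensive.
Import Order.TTheory GRing.Theory Num.Theory.
Import numFieldNormedType.Exports.
Local Open Scope classical_set_scope.
Local Open Scope ring_scope.

Notation cplx R := (R * R)%type.
Notation C2 R := ((R * R) * (R * R))%type.

Section Defs.
Variable R : realType.
Local Notation cplx := (cplx R).
Local Notation C2 := (C2 R).

Definition cadd (a b : cplx) : cplx := (a.1 + b.1, a.2 + b.2).
Definition cmul (a b : cplx) : cplx := (a.1 * b.1 - a.2 * b.2, a.1 * b.2 + a.2 * b.1).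

Definition padd (x y : C2) : C2 := (cadd x.1 y.1, cadd x.2 y.2).
Definition psub (x y : C2) : C2 :=
  ((x.1.1 - y.1.1, x.1.2 - y.1.2), (x.2.1 - y.2.1, x.2.2 - y.2.2)).
Definition pscale (t : cplx) (x : C2) : C2 := (cmul t x.1, cmul t x.2).
Definition pzero : C2 := ((0, 0), (0, 0)).

Definition norm2 (x : C2) : R :=
  x.1.1 ^+ 2 + x.1.2 ^+ 2 + x.2.1 ^+ 2 + x.2.2 ^+ 2.

Definition ball1 : set C2 := [set x | norm2 x <= 1].
Definition sphere3 : set C2 := [set x | norm2 x = 1].

(* convex body: compact convex subset with nonempty interior
   (topology = product topology on (R*R)*(R*R), i.e. the Euclidean one) *)
Definition convex_set (K : set C2) : Prop :=
  forall x y (t : R), K x -> K y -> 0 <= t <= 1 ->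
    K (((1 - t) * x.1.1 + t * y.1.1, (1 - t) * x.1.2 + t * y.1.2),
       ((1 - t) * x.2.1 + t * y.2.1, (1 - t) * x.2.2 + t * y.2.2)).
Definition convex_body (K : set C2) : Prop :=
  compact K /\ convex_set K /\ (interior K !=set0).

Definition cline (p v : C2) : set C2 :=
  [set x | exists t : cplx, x = padd p (pscale t v)].
Definition complex_line (L : set C2) : Prop :=
  exists p v, v <> pzero /\ L = cline p v.

Definition round_disk_in (L D : set C2) : Prop :=
  exists c r, L c /\ 0 < r /\ D = [set x | L x /\ norm2 (psub x c) <= r ^+ 2].

Definition bombon (K : set C2) : Prop :=
  convex_body K /\
  forall L, complex_line L ->
    (L `&` K = set0) \/ (exists a, L `&` K = [set a]) \/ round_disk_in L (L `&` K).

Definition caffine (a11 a12 a21 a22 : cplx) (b : C2) (x : C2) : C2 :=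
  (cadd (cadd (cmul a11 x.1) (cmul a12 x.2)) b.1,
   cadd (cadd (cmul a21 x.1) (cmul a22 x.2)) b.2).

Definition ellipsoid (E : set C2) : Prop :=
  exists a11 a12 a21 a22 b,
    bijective (caffine a11 a12 a21 a22 b) /\
    E = caffine a11 a12 a21 a22 b @` ball1.

Definition vol (S : set C2) : \bar R :=
  (((@lebesgue_measure R) \x (@lebesgue_measure R)) \x
   ((@lebesgue_measure R) \x (@lebesgue_measure R)))%E S.

Definition min_vol_ellipsoid (K E0 : set C2) : Prop :=
  ellipsoid E0 /\ K `<=` E0 /\
  (forall E, ellipsoid E -> K `<=` E -> (vol E0 <= vol E)%E) /\
  (forall E, ellipsoid E -> K `<=` E -> (vol E <= vol E0)%E -> E = E0).

(* linear closedness in the abstract linear space LS^3: the abstract line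
   through distinct x, y in S^3 is cline x (y - x) `&` S^3 *)
Definition linearly_closed (A : set C2) : Prop :=
  A `<=` sphere3 /\
  forall x y, A x -> A y -> x <> y -> cline x (psub y x) `&` sphere3 `<=` A.

End Defs.

(* Two distinct points x, y of K ∩ S^3 span a complex line L, which meets the bombon K
   in a closed round disk D and the unit ball B ⊇ K in a disk bounded by the circle
   L ∩ S^3.  So D is a disk inside a disk, touching the boundary circle at x and y.
   Unless the centres coincide, the point of D farthest from the centre of the big disk
   is unique, so D touches the circle at most once; hence the disks are concentric and
   L ∩ S^3 ⊆ D ⊆ K. *)

From mathcomp Require Import all_boot all_order all_algebra.
From mathcomp Require Import all_classical all_reals all_analysis.
From mathcomp Require Import ring lra.
Set Implicit Arguments. Unset Strict Implicit.
Import Order.TTheory GRing.Theory Num.Theory.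
Local Open Scope classical_set_scope.
Local Open Scope ring_scope.

Section PlaneDisks.
Variable R : rcfType.
Implicit Types (p q c g x : R * R) (rho sigma : R).

Definition sqdist p q : R := (p.1 - q.1) ^+ 2 + (p.2 - q.2) ^+ 2.

Lemma sqdist_ge0 p q : 0 <= sqdist p q.
Proof. by rewrite addr_ge0 ?sqr_ge0. Qed.

Lemma sqdist_eq0 p q : sqdist p q = 0 -> p = q.
Proof.
move: p q => [p1 p2] [q1 q2] /eqP; rewrite /sqdist paddr_eq0 ?sqr_ge0 //=.
by rewrite !sqrf_eq0 !subr_eq0 => /andP[/eqP-> /eqP->].
Qed.

Lemma disk_sub_disk_radii c g rho sigma n r :
  (forall x, sqdist x c <= rho -> sqdist x g <= sigma) ->
  0 < n -> n ^+ 2 = sqdist c g -> 0 <= r -> r ^+ 2 = rho ->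
  (n + r) ^+ 2 <= sigma.
Proof.
move=> sub n_gt0 n2 r_ge0 r2; set s := r / n.
have s_n : s * n = r by rewrite mulfVK // gt_eqF.
pose x := (c.1 + s * (c.1 - g.1), c.2 + s * (c.2 - g.2)).
have -> : (n + r) ^+ 2 = sqdist x g.
  have -> : n + r = (1 + s) * n by rewrite -s_n; ring.
  by rewrite exprMn n2 /x /sqdist /=; ring.
apply: sub; have -> : sqdist x c = s ^+ 2 * sqdist c g by rewrite /x /sqdist /=; ring.
by rewrite -n2 -exprMn s_n r2.
Qed.

Lemma disk_contact_point c g rho sigma n r p :
  0 < n -> n ^+ 2 = sqdist c g -> 0 <= r -> r ^+ 2 = rho -> (n + r) ^+ 2 <= sigma ->
  sqdist p c <= rho -> sqdist p g = sigma ->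
  p = (c.1 + r / n * (c.1 - g.1), c.2 + r / n * (c.2 - g.2)).
Proof.
move=> n_gt0 n2 r_ge0 r2 far p_in p_on.
set d := (c.1 - g.1, c.2 - g.2); set e := (p.1 - c.1, p.2 - c.2).
have e2 : e.1 ^+ 2 + e.2 ^+ 2 <= r ^+ 2 by rewrite r2.
have de : n * r <= d.1 * e.1 + d.2 * e.2.
  have : (n + r) ^+ 2 <= n ^+ 2 + 2 * (d.1 * e.1 + d.2 * e.2) + (e.1 ^+ 2 + e.2 ^+ 2).
    by rewrite n2 -p_on in far *; apply: le_trans far _; rewrite /sqdist /d /e /=; lra.
  by move: e2; nra.
have dn : d.1 ^+ 2 + d.2 ^+ 2 = n ^+ 2 by rewrite n2.
have aligned : sqdist (r * d.1, r * d.2) (n * e.1, n * e.2) = 0.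
  apply/eqP; rewrite eq_le sqdist_ge0 andbT.
  have -> : sqdist (r * d.1, r * d.2) (n * e.1, n * e.2) =
      r ^+ 2 * n ^+ 2 - 2 * (r * n) * (d.1 * e.1 + d.2 * e.2) + n ^+ 2 * (e.1 ^+ 2 + e.2 ^+ 2).
    by rewrite -{1}dn /sqdist /=; ring.
  have rn_ge0 : 0 <= r * n by rewrite mulr_ge0 // ltW.
  have := ler_wpM2l rn_ge0 de; have := ler_wpM2l (sqr_ge0 n) e2; nra.
case: (sqdist_eq0 aligned) => de1 de2.
have nV : n != 0 by rewrite gt_eqF.
have E1 : r / n * d.1 = e.1 by rewrite mulrAC de1 [n * _]mulrC mulfK.
have E2 : r / n * d.2 = e.2 by rewrite mulrAC de2 [n * _]mulrC mulfK.
move: E1 E2; rewrite /d /e /=; case: p {p_in p_on e e2 de aligned de1 de2} => p1 p2 /= -> ->.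
by congr (_, _); ring.
Qed.

Lemma disk_sub_disk_contains_circle c g rho sigma p q :
  (forall x, sqdist x c <= rho -> sqdist x g <= sigma) ->
  sqdist p c <= rho -> sqdist p g = sigma ->
  sqdist q c <= rho -> sqdist q g = sigma -> p <> q ->
  forall x, sqdist x g = sigma -> sqdist x c <= rho.
Proof.
move=> sub p_in p_on q_in q_on pq x x_on.
have [/sqdist_eq0 cg|cg_neq0] := eqVneq (sqdist c g) 0.
  by rewrite cg x_on -p_on -cg.
exfalso; apply: pq.
have n_gt0 : 0 < Num.sqrt (sqdist c g) by rewrite sqrtr_gt0 lt0r cg_neq0 sqdist_ge0.
have n2 : Num.sqrt (sqdist c g) ^+ 2 = sqdist c g by rewrite sqr_sqrtr ?sqdist_ge0.
have rho_ge0 : 0 <= rho := le_trans (sqdist_ge0 p c) p_in.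
have r_ge0 := sqrtr_ge0 rho; have r2 : Num.sqrt rho ^+ 2 = rho by rewrite sqr_sqrtr.
have far := disk_sub_disk_radii sub n_gt0 n2 r_ge0 r2.
by rewrite (disk_contact_point n_gt0 n2 r_ge0 r2 far p_in p_on)
  (disk_contact_point n_gt0 n2 r_ge0 r2 far q_in q_on).
Qed.
End PlaneDisks.

Section ComplexLines.
Variable R : realType.
Implicit Types (x y w : C2 R) (s t : cplx R).

Lemma padd_pscale0 x w : padd x (pscale (0, 0) w) = x.
Proof.
move: x w => [[x1 x2] [x3 x4]] [[w1 w2] [w3 w4]].
by rewrite /padd /pscale /cadd /cmul /=; congr (_, _); congr (_, _); rewrite /=; ring.
Qed.

Lemma padd_pscale1_psub x y : padd x (pscale (1, 0) (psub y x)) = y.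
Proof.
move: x y => [[x1 x2] [x3 x4]] [[y1 y2] [y3 y4]].
by rewrite /padd /pscale /psub /cadd /cmul /=; congr (_, _); congr (_, _); rewrite /=; ring.
Qed.

Lemma norm2_ge0 x : 0 <= norm2 x.
Proof. by rewrite /norm2 !addr_ge0 ?sqr_ge0. Qed.

Lemma norm2_gt0 w : w <> pzero R -> 0 < norm2 w.
Proof.
move: w => [[w1 w2] [w3 w4]] w_neq0; rewrite lt0r norm2_ge0 andbT.
apply: contra_notN w_neq0; rewrite /norm2 /= !paddr_eq0 ?addr_ge0 ?sqr_ge0 //.
by rewrite !sqrf_eq0 => /andP[/andP[/andP[/eqP-> /eqP->] /eqP->] /eqP->].
Qed.

Lemma psub_neq0 x y : x <> y -> psub y x <> pzero R.
Proof.
move: x y => [[x1 x2] [x3 x4]] [[y1 y2] [y3 y4]] xy.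
by case=> /subr0_eq e1 /subr0_eq e2 /subr0_eq e3 /subr0_eq e4; apply: xy; rewrite e1 e2 e3 e4.
Qed.

Lemma norm2_psub_line x w s t :
  norm2 (psub (padd x (pscale s w)) (padd x (pscale t w))) = norm2 w * sqdist s t.
Proof.
move: x w s t => [[x1 x2] [x3 x4]] [[w1 w2] [w3 w4]] [a b] [c d].
by rewrite /norm2 /psub /padd /pscale /cadd /cmul /sqdist /=; ring.
Qed.

(* The coordinate of the orthogonal projection of the origin on the line [x + C w]. *)
Definition foot x w : cplx R :=
  (- (x.1.1 * w.1.1 + x.1.2 * w.1.2 + x.2.1 * w.2.1 + x.2.2 * w.2.2) / norm2 w,
   - (x.1.2 * w.1.1 - x.1.1 * w.1.2 + x.2.2 * w.2.1 - x.2.1 * w.2.2) / norm2 w).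

Lemma norm2_line_foot x w t : norm2 w != 0 ->
  norm2 (padd x (pscale t w)) =
  norm2 (padd x (pscale (foot x w) w)) + norm2 w * sqdist t (foot x w).
Proof.
move: x w t => [[x1 x2] [x3 x4]] [[w1 w2] [w3 w4]] [a b].
by rewrite /foot /norm2 /padd /pscale /cadd /cmul /sqdist /= => W0; field.
Qed.

(* In the coordinate [t] of [x + t w], the unit ball cuts the line in the disk of
   centre [foot x w] and squared radius [slice_sqradius x w]. *)
Definition slice_sqradius x w : R :=
  (1 - norm2 (padd x (pscale (foot x w) w))) / norm2 w.

Section LineCoordinates.
Variables x w : C2 R.
Hypothesis w_gt0 : 0 < norm2 w.
Local Notation pt t := (padd x (pscale t w)).
Let w_neq0 : norm2 w != 0 := lt0r_neq0 w_gt0.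

Lemma norm2_line_le1 t : (norm2 (pt t) <= 1) = (sqdist t (foot x w) <= slice_sqradius x w).
Proof. by rewrite (norm2_line_foot _ _ w_neq0) ler_pdivlMr // mulrC lerBrDl. Qed.

Lemma norm2_line_eq1 t : (norm2 (pt t) == 1) = (sqdist t (foot x w) == slice_sqradius x w).
Proof.
rewrite (norm2_line_foot _ _ w_neq0) /slice_sqradius.
by apply/eqP/eqP => [<- | ->]; field.
Qed.

Lemma norm2_line_sub_le s t r2 :
  (norm2 (psub (pt t) (pt s)) <= r2) = (sqdist t s <= r2 / norm2 w).
Proof. by rewrite norm2_psub_line ler_pdivlMr // mulrC. Qed.

End LineCoordinates.
End ComplexLines.

Lemma bombon_cline_disk (R : realType) (K : set (C2 R)) x y :
  bombon K -> K x -> K y -> x <> y ->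
  round_disk_in (cline x (psub y x)) (cline x (psub y x) `&` K).
Proof.
move=> [_ bK] Kx Ky xy; set L := cline x (psub y x).
have LKx : (L `&` K) x by split=> //; exists (0, 0); rewrite padd_pscale0.
have LKy : (L `&` K) y by split=> //; exists (1, 0); rewrite padd_pscale1_psub.
have [|LK0|[[a LKa]|//]] := bK L; first by exists x, (psub y x); split=> //; exact: psub_neq0.
  by move: LKx; rewrite LK0.
by move: LKx LKy xy; rewrite LKa => -> ->.
Qed.

Theorem lemma3p2 (R : realType) (K : set (C2 R)) :
  bombon K -> min_vol_ellipsoid K (@ball1 R) ->
  linearly_closed (K `&` @sphere3 R).
Proof.
move=> bK [_ [K_sub_B _]]; split=> [z [] //|x y [Kx Sx] [Ky Sy] xy z [[tz ->] Sz]].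
split=> //; have [c [r [[tc ->] [_ LK]]]] := bombon_cline_disk bK Kx Ky xy.
set w := psub y x in Sz LK *; have w_gt0 := norm2_gt0 (psub_neq0 xy).
have K_line t : K (padd x (pscale t w)) <-> sqdist t tc <= r ^+ 2 / norm2 w.
  rewrite -(norm2_line_sub_le x w_gt0); split=> [Kt | Dt].
    have : (cline x w `&` K) (padd x (pscale t w)) by split=> //; exists t.
    by rewrite LK => -[].
  have : (cline x w `&` K) (padd x (pscale t w)) by rewrite LK; split=> //; exists t.
  by case.
have S_line t : sphere3 (padd x (pscale t w)) -> sqdist t (foot x w) = slice_sqradius x w.
  by move=> /eqP; rewrite (norm2_line_eq1 x w_gt0) => /eqP.
apply/K_line; apply: (disk_sub_disk_contains_circle
  (g := foot x w) (sigma := slice_sqradius x w) (p := (0, 0)) (q := (1, 0))).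
- by move=> t /K_line /K_sub_B; rewrite /ball1 /= (norm2_line_le1 x w_gt0).
- by apply/K_line; rewrite padd_pscale0.
- by apply: S_line; rewrite padd_pscale0.
- by apply/K_line; rewrite padd_pscale1_psub.
- by apply: S_line; rewrite padd_pscale1_psub.
- by case=> /esym/eqP; rewrite oner_eq0.
- by apply: S_line.
Qed.
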